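(* Define integers $\lambda_r$ for $r\ge 1$ by $\lambda_1=1$ and $\lambda_r = 2\left(3^{\lceil r/2 \rceil}+1\right)\lambda_{\lceil r/2 \rceil}$ for $r \ge 2$. Then for every integer $r \ge 1$, $g(3^r,3) \le \lambda_r$.
   Context: For integers $2\le k\le n$, let $S_n$ denote the set of permutations of $[n]=\{1,\dots,n\}$ (written as sequences), and $S_{n,k}$ the set of all sequences of $k$ distinct elements of $[n]$. A sequence $\kappa\in S_{n,k}$ is a subsequence of a permutation $\pi\in S_n$ if its elements appear in $\pi$ in the same relative order as in $\kappa$. A perfect sequence covering array ${\rm PSCA}(n,k)$ with multiplicity $\lambda$ (a positive integer) is a multiset $X$ of elements of $S_n$ such that every $\kappa\in S_{n,k}$ is a subsequence of exactly $\lambda$ elements of $X$ (counted with multiplicity); such an $X$ has size $\lambda k!$. $g(n,k)$ denotes the smallest $\lambda$ for which a ${\rm PSCA}(n,k)$ with multiplicity $\lambda$ exists. *)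

From mathcomp Require Import all_boot all_order all_fingroup.
Set Implicit Arguments. Unset Strict Implicit. Unset Printing Implicit Defensive.

(* A permutation pi of [n] (here [n] is modelled by 'I_n = {0,..,n-1}),
   written as the sequence (pi 0, pi 1, ..., pi (n-1)). *)
Definition perm_word (n : nat) (pi : 'S_n) : seq 'I_n := [seq pi i | i : 'I_n].

Definition is_subseq_of (n k : nat) (kappa : k.-tuple 'I_n) (pi : 'S_n) : bool :=
  subseq kappa (perm_word pi).

(* X (a multiset of permutations, given as a list) is a PSCA(n,k) with
   multiplicity lam: lam is a positive integer and every kappa in S_{n,k}
   is a subsequence of exactly lam elements of X, counted with multiplicity. *)
Definition is_PSCA (n k lam : nat) (X : seq 'S_n) : Prop :=
  0 < lam /\
  forall kappa : k.-tuple 'I_n, uniq kappa ->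
    seq.count (fun pi : 'S_n => is_subseq_of kappa pi) X = lam.

Definition PSCA_exists (n k lam : nat) : Prop := exists X : seq 'S_n, @is_PSCA n k lam X.

(* g(n,k) <= m, with g(n,k) the smallest lam admitting a PSCA(n,k) of
   multiplicity lam: unfolded, there is such a lam with lam <= m. *)
Definition g_le (n k m : nat) : Prop := exists lam, lam <= m /\ PSCA_exists n k lam.

(* lambda_1 = 1, lambda_r = 2 (3^ceil(r/2) + 1) lambda_ceil(r/2) for r >= 2.
   ceil(r/2) = uphalf r. Defined via fuel; fuel r suffices since
   uphalf r < r for r >= 2. *)
Fixpoint lam_aux (fuel r : nat) : nat :=
  match fuel with
  | 0 => 1
  | f.+1 => if r <= 1 then 1 else 2 * (3 ^ uphalf r + 1) * lam_aux f (uphalf r)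
  end.

Definition lambda_seq (r : nat) : nat := lam_aux r r.

Lemma lambda_seq_1 : lambda_seq 1 = 1. Proof. by []. Qed.
Lemma lambda_seq_2 : lambda_seq 2 = 8. Proof. by []. Qed.
Lemma lambda_seq_3 : lambda_seq 3 = 160. Proof. by []. Qed.
Lemma lambda_seq_4 : lambda_seq 4 = 2 * (9 + 1) * 8. Proof. by []. Qed.

From mathcomp Require Import all_boot all_order all_fingroup all_algebra finfield.
From mathcomp Require Import ring zify.
Set Implicit Arguments. Unset Strict Implicit. Unset Printing Implicit Defensive.
Import GRing.Theory.

(* Let q = 3^ceil(r/2) and let F be the field with q elements.  The q^2 points of
   the affine plane F x F fall into q + 1 classes of parallel lines.  Given a
   PSCA(q,3) of multiplicity lam, each member h and each class yield two orderings
   of the plane: lines ordered by h, and the points of each line ordered by h, once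
   forwards and once backwards.  A triple (a, b, c) whose lines in a class are
   pairwise distinct, or all equal, is covered 2 lam times by that class; when just
   two of its points share a line, the count is 3 lam if they are a, b or b, c and 0
   if they are a, c.  Two distinct points share a line in exactly one class, so the
   deviations cancel and every triple is covered 2 (q + 1) lam times; restricting to
   3^r <= q^2 of the points gives the recursion for lambda_r. *)

Lemma count_big (T : Type) (a : pred T) (s : seq T) : count a s = \sum_(x <- s) a x.
Proof. by rewrite -sumn_count sumnE big_map. Qed.

Lemma subseq2_index (T : eqType) (s : seq T) b c : uniq s -> b != c ->
  subseq [:: b; c] s = [&& b \in s, c \in s & index b s < index c s].
Proof.
elim: s => [|y s IH] //= /andP[ys us] bc.
rewrite !inE; case: (eqVneq b y) => [<-|by_] /=.
  by rewrite sub1seq (negPf bc) /= andbT; move: bc; rewrite eq_sym => /negPf ->.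
rewrite IH // (eq_sym y c); case: (eqVneq c y) => [->|cy] /=.
  by rewrite (negPf ys) !andbF.
by rewrite ltnS.
Qed.

Lemma subseq3_index (T : eqType) (s : seq T) a b c :
  uniq s -> a != b -> b != c -> a != c ->
  subseq [:: a; b; c] s =
  [&& a \in s, b \in s, c \in s, index a s < index b s & index b s < index c s].
Proof.
elim: s => [|y s IH] //= /andP[ys us] ab bc ac.
rewrite !inE (eq_sym y a) (eq_sym y b) (eq_sym y c).
case: (eqVneq a y) => [ay|ay] /=.
  by subst a; rewrite subseq2_index // eq_sym (negPf ab) eq_sym (negPf ac) /= ltnS.
rewrite IH //; case: (eqVneq b y) => [->|by_] /=; first by rewrite (negPf ys) !andbF.
case: (eqVneq c y) => [->|cy] /=; first by rewrite (negPf ys) !andbF.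
by rewrite !ltnS.
Qed.

Lemma perm_word_subseq3 n (pi : 'S_n) (a b c : 'I_n) : a != b -> b != c -> a != c ->
  subseq [:: a; b; c] (perm_word pi) = ((pi^-1)%g a < (pi^-1)%g b < (pi^-1)%g c).
Proof.
move=> ab bc ac.
have uw : uniq (perm_word pi) by rewrite map_inj_uniq ?enum_uniq //; apply: perm_inj.
have mw x : x \in perm_word pi by rewrite -(permKV pi x) map_f ?mem_enum.
have iw x : index x (perm_word pi) = (pi^-1)%g x.
  by rewrite -{1}(permKV pi x) index_map ?index_enum_ord //; apply: perm_inj.
by rewrite subseq3_index // !mw !iw.
Qed.

Definition ordered3 (T : Type) (f : T -> nat) (a b c : T) := f a < f b < f c.

(* A PSCA(T,3) in which each array member is given by its rank function
   [f : T -> nat] (injective, [f t] being the position of [t]) rather than by a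
   permutation: the triple [(a, b, c)] is covered by [f] when [f] increases along it. *)
Definition ranking_psca (T : finType) (lam : nat) (Xs : seq {ffun T -> nat}) : Prop :=
  [/\ 0 < lam, (forall f, f \in Xs -> injective f) &
      forall a b c : T, a != b -> b != c -> a != c ->
        count (fun f : {ffun T -> nat} => ordered3 f a b c) Xs = lam].

Section PermOfRanking.
Variables (n : nat) (f : 'I_n -> nat).
Hypothesis f_inj : injective f.

Definition rank (i : 'I_n) := #|[set j | f j < f i]|.

Lemma rank_sub i j : f i < f j -> [set k | f k < f i] \proper [set k | f k < f j].
Proof.
move=> lt_ij; apply/properP; split; last by exists i; rewrite !inE ?ltnn.
by apply/subsetP => k; rewrite !inE => /ltn_trans; apply.
Qed.

Lemma ltn_rank i j : (rank i < rank j) = (f i < f j).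
Proof.
apply/idP/idP => [lt_r|/rank_sub]; last exact: proper_card.
case: (ltngtP (f i) (f j)) => // [/rank_sub/proper_card|/f_inj eq_ij].
  by rewrite ltnNge (ltnW lt_r).
by move: lt_r; rewrite eq_ij ltnn.
Qed.

Lemma rank_lt_n i : rank i < n.
Proof.
rewrite -[n in _ < n]card_ord; apply: proper_card; apply/properP.
by split; [apply/subsetP | exists i; rewrite ?inE ?ltnn].
Qed.

Definition rank_ord i : 'I_n := Ordinal (rank_lt_n i).

Lemma rank_ord_inj : injective rank_ord.
Proof.
move=> i j /(congr1 val) /= eq_r.
by case: (ltngtP (f i) (f j)) => [||/f_inj //]; rewrite -ltn_rank eq_r ltnn.
Qed.

Definition perm_of_ranking : 'S_n := ((perm rank_ord_inj)^-1)%g.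

Lemma perm_of_ranking_subseq3 a b c : a != b -> b != c -> a != c ->
  subseq [:: a; b; c] (perm_word perm_of_ranking) = ordered3 f a b c.
Proof. by move=> ab bc ac; rewrite perm_word_subseq3 // invgK !permE /= !ltn_rank. Qed.

End PermOfRanking.

Definition perm_of_ffun n (f : {ffun 'I_n -> nat}) : 'S_n :=
  if injectiveP f is ReflectT f_inj then perm_of_ranking f_inj else 1%g.

Lemma ranking_psca_PSCA n lam (Xs : seq {ffun 'I_n -> nat}) :
  ranking_psca lam Xs -> PSCA_exists n 3 lam.
Proof.
case=> lam_gt0 Xs_inj Xs_cover; exists (map (@perm_of_ffun n) Xs); split=> // kappa.
case: kappa => [[|a [|b [|c [|? ?]]]] //= size_kappa].
rewrite !inE negb_or andbT => /andP[/andP[ab ac] bc].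
rewrite count_map -(Xs_cover a b c) //; apply: eq_in_count => f /Xs_inj f_inj /=.
rewrite /is_subseq_of /perm_of_ffun; case: injectiveP => [inj_f|//].
exact: perm_of_ranking_subseq3.
Qed.

Lemma ranking_psca_restrict (T T' : finType) (g : T' -> T) lam Xs :
  injective g -> ranking_psca lam Xs ->
  ranking_psca lam [seq [ffun t => f (g t)] | f : {ffun T -> nat} <- Xs].
Proof.
move=> g_inj [lam_gt0 Xs_inj Xs_cover]; split=> //.
  move=> _ /mapP[f /Xs_inj f_inj ->] x y; rewrite !ffunE => /f_inj; exact: g_inj.
move=> a b c ab bc ac; rewrite count_map -(Xs_cover (g a) (g b) (g c)) ?inj_eq //.
by apply: eq_count => f; rewrite /ordered3 /= !ffunE.
Qed.

Lemma ltn_by_third (x y z : nat) : x != y -> y != z -> x != z ->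
  nat_of_bool (x < y) = ordered3 id z x y + ordered3 id x z y + ordered3 id x y z.
Proof.
by rewrite /ordered3 /=; case: (ltngtP x y); case: (ltngtP y z); case: (ltngtP x z) => //= *; lia.
Qed.

Lemma ranking_psca_pair (T : finType) lam (Xs : seq {ffun T -> nat}) (i j : T) :
  3 <= #|T| -> ranking_psca lam Xs -> i != j ->
  count (fun f : {ffun T -> nat} => f i < f j) Xs = 3 * lam.
Proof.
move=> T_ge3 [_ Xs_inj Xs_cover] ij.
have [k /andP[ki kj]] : exists k, (k != i) && (k != j).
  apply/existsP; apply: contraTT T_ge3 => /existsPn no_k; rewrite -ltnNge.
  apply: (@leq_ltn_trans #|[set i; j]|); last by rewrite cards2 ij.
  by rewrite -cardsT subset_leq_card //; apply/subsetP => k _; move: (no_k k);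
    rewrite !inE negb_and !negbK.
rewrite count_big (eq_big_seq (fun f : {ffun T -> nat} =>
    ordered3 f k i j + ordered3 f i k j + ordered3 f i j k)); last first.
  by move=> f /Xs_inj f_inj; rewrite (ltn_by_third (z := f k)) ?(inj_eq f_inj) // eq_sym.
rewrite !big_split /= -!count_big !Xs_cover // 1?eq_sym //; lia.
Qed.

Lemma ltn_lex M w1 w2 u v : u < M -> v < M ->
  (w1 * M + u < w2 * M + v) = (w1 < w2) || (w1 == w2) && (u < v).
Proof.
move=> uM vM; case: (ltngtP w1 w2) => [lt_w|lt_w|->] /=; last by rewrite ltn_add2l.
  apply/idP; apply: (@leq_trans (w1.+1 * M)).
    by rewrite mulSn [X in _ < X]addnC ltn_add2l.
  by apply: leq_trans (leq_addr _ _); rewrite leq_mul2r lt_w orbT.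
apply/negbTE; rewrite -leqNgt; apply: (@leq_trans (w2.+1 * M)).
  by apply: ltnW; rewrite mulSn [X in _ < X]addnC ltn_add2l.
by apply: leq_trans (leq_addr _ _); rewrite leq_mul2r lt_w orbT.
Qed.

Lemma lex_inj M w1 w2 u v : u < M -> v < M ->
  w1 * M + u = w2 * M + v -> w1 = w2 /\ u = v.
Proof.
move=> uM vM e; have := ltn_lex w1 w2 uM vM; have := ltn_lex w2 w1 vM uM.
rewrite e ltnn; case: (ltngtP w1 w2) => //= eq_w _ _.
by split=> //; move: e; rewrite eq_w => /addnI.
Qed.

Lemma andb_ltn_gtn (A : bool) (x y : nat) : x != y -> (x < y) && A + (y < x) && A = A.
Proof. by case: A; case: (ltngtP x y). Qed.

Section AffinePlane.
Variable F : finFieldType.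

(* The parallel classes of lines of [F * F] are indexed by [option F]: [Some k] is
   the class of lines of slope [k] and [None] that of the vertical lines.  [line d p]
   is the label of the line of class [d] through [p], and [coord d p] the position of
   [p] on that line. *)
Definition line (d : option F) (p : F * F) : F :=
  if d is Some k then (p.2 - k * p.1)%R else p.1.

Definition coord (d : option F) (p : F * F) : F :=
  if d is Some _ then p.1 else p.2.

Lemma line_coord_inj d p q : line d p = line d q -> coord d p = coord d q -> p = q.
Proof.
case: d p q => [k|] [p1 p2] [q1 q2] /= e1 e2; last by rewrite e1 e2.
by subst q1; move/addIr: e1 => ->.
Qed.

Lemma common_line_class p q : p != q ->
  exists d0, forall d, (line d p == line d q) = (d == d0).
Proof.
case: p q => [p1 p2] [q1 q2] pq; case: (eqVneq p1 q1) => [e1|ne1].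
  subst q1; exists None => -[k|] //=; last by rewrite eqxx.
  by apply/negbTE; apply: contraNneq pq => /addIr ->.
have nz : (p1 - q1 != 0)%R by rewrite subr_eq0.
exists (Some ((p2 - q2) / (p1 - q1))%R) => -[k|] /=; last by rewrite (negPf ne1).
rewrite -subr_eq0 -[_ == Some _]/(k == _).
have -> : (p2 - k * p1 - (q2 - k * q1) = (p2 - q2) - k * (p1 - q1))%R by ring.
by rewrite subr_eq0 -(can2_eq (mulfK nz) (divfK nz)) eq_sym.
Qed.

Lemma sum_common_line p q : p != q -> \sum_(d : option F) (line d p == line d q) = 1.
Proof.
case/common_line_class => d0 pq_d0; rewrite (bigD1 d0) //= pq_d0 eqxx big1 // => d.
by rewrite pq_d0 => /negPf ->.
Qed.

Lemma coord_neq d p q : p != q -> line d p = line d q -> coord d p != coord d q.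
Proof. by move=> pq e; apply: contraNneq pq => /(line_coord_inj e) ->. Qed.

Definition hmax (h : {ffun F -> nat}) := \max_(t : F) h t.

Lemma leq_hmax (h : {ffun F -> nat}) t : h t <= hmax h.
Proof. exact: leq_bigmax. Qed.

Definition coord_rank (rev : bool) (h : {ffun F -> nat}) (t : F) :=
  if rev then hmax h - h t else h t.

Definition line_ranking (d : option F) (h : {ffun F -> nat}) (rev : bool) :
  {ffun F * F -> nat} :=
  [ffun p => h (line d p) * (hmax h).+1 + coord_rank rev h (coord d p)].

Lemma coord_rank_lt rev (h : {ffun F -> nat}) t : coord_rank rev h t < (hmax h).+1.
Proof. by rewrite /coord_rank; case: rev; rewrite ltnS ?leq_subr ?leq_hmax. Qed.

Lemma coord_rank_inj rev (h : {ffun F -> nat}) :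
  injective h -> injective (coord_rank rev h).
Proof.
move=> h_inj s t; rewrite /coord_rank; case: rev => [|/h_inj //].
by have := leq_hmax h s; have := leq_hmax h t => *; apply: h_inj; lia.
Qed.

Lemma line_ranking_lt d (h : {ffun F -> nat}) rev p q : injective h ->
  (line_ranking d h rev p < line_ranking d h rev q) =
  (h (line d p) < h (line d q)) || (line d p == line d q) &&
     (if rev then h (coord d q) < h (coord d p) else h (coord d p) < h (coord d q)).
Proof.
move=> h_inj; rewrite !ffunE ltn_lex ?coord_rank_lt // (inj_eq h_inj).
rewrite /coord_rank; case: rev => //; congr (_ || (_ && _)).
by have := leq_hmax h (coord d p); have := leq_hmax h (coord d q); lia.
Qed.

Lemma line_ranking_inj d (h : {ffun F -> nat}) rev :
  injective h -> injective (line_ranking d h rev).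
Proof.
move=> h_inj p q; rewrite !ffunE => /(lex_inj (coord_rank_lt _ _ _) (coord_rank_lt _ _ _)).
by case=> /h_inj eq_l /(coord_rank_inj h_inj); apply: line_coord_inj.
Qed.

Lemma ordered3_line_rankings d (h : {ffun F -> nat}) a b c :
  injective h -> a != b -> b != c -> a != c ->
  ordered3 (line_ranking d h false) a b c + ordered3 (line_ranking d h true) a b c =
  if line d a == line d b then
    if line d b == line d c then
      ordered3 h (coord d a) (coord d b) (coord d c) +
      ordered3 h (coord d c) (coord d b) (coord d a)
    else (h (line d b) < h (line d c) : nat)
  else if line d b == line d c then (h (line d a) < h (line d b) : nat)
  else if line d a == line d c then 0
  else 2 * ordered3 h (line d a) (line d b) (line d c).
Proof.
move=> h_inj ab bc ac; rewrite /ordered3 !line_ranking_lt //.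
case: (eqVneq (line d a) (line d b)) => eab; case: (eqVneq (line d b) (line d c)) => ebc.
- by rewrite eab ebc ltnn /= [X in _ + nat_of_bool X = _]andbC.
- rewrite eab ltnn /= !orbF.
  by rewrite andb_ltn_gtn // (inj_eq h_inj) coord_neq.
- rewrite -ebc ltnn /= !orbF.
  by rewrite !(andbC (h (line d a) < _)) andb_ltn_gtn // (inj_eq h_inj) coord_neq.
case: (eqVneq (line d a) (line d c)) => [eac|_] /=; last by rewrite !orbF addnn mul2n.
by rewrite -eac !orbF; case: ltngtP.
Qed.

Section PlaneCover.
Variables (lam : nat) (Xs : seq {ffun F -> nat}).
Hypotheses (Xs_psca : ranking_psca lam Xs) (F_ge3 : 3 <= #|F|).

Definition line_count d a b c :=
  \sum_(h <- Xs) (ordered3 (line_ranking d h false) a b c +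
                  ordered3 (line_ranking d h true) a b c).

Lemma line_count_eq d a b c : a != b -> b != c -> a != c ->
  line_count d a b c + 2 * lam * (line d a == line d c) =
  2 * lam + lam * (line d a == line d b) + lam * (line d b == line d c).
Proof.
move=> ab bc ac; have [_ Xs_inj Xs_cover] := Xs_psca.
have cover x y z : x != y -> y != z -> x != z -> \sum_(h <- Xs) ordered3 h x y z = lam.
  by move=> *; rewrite -count_big Xs_cover.
have pair x y : x != y -> \sum_(h <- Xs) (h x < h y) = 3 * lam.
  by move=> *; rewrite -count_big (ranking_psca_pair F_ge3 Xs_psca).
rewrite /line_count (eq_big_seq _ (fun h hX => ordered3_line_rankings d (Xs_inj h hX) ab bc ac)).
case: (eqVneq (line d a) (line d b)) => eab; case: (eqVneq (line d b) (line d c)) => ebc /=.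
- have := coord_neq ab eab; have := coord_neq bc ebc; have := coord_neq ac (etrans eab ebc).
  by rewrite eab ebc eqxx => *; rewrite big_split /= !cover // 1?eq_sym //; lia.
- by rewrite eab (negPf ebc) pair //=; lia.
- by rewrite -ebc (negPf eab) pair //=; lia.
case: (eqVneq (line d a) (line d c)) => eac /=; first by rewrite big1_eq; lia.
by rewrite -big_distrr cover //=; lia.
Qed.

Definition plane_rankings := flatten
  [seq flatten [seq [:: line_ranking d h false; line_ranking d h true] | h <- Xs]
  | d <- index_enum (option F)].

Lemma count_plane_rankings a b c :
  count (fun f : {ffun F * F -> nat} => ordered3 f a b c) plane_rankings =
  \sum_(d : option F) line_count d a b c.
Proof.
rewrite count_flatten sumnE !big_map; apply: eq_bigr => d _.
by rewrite count_flatten sumnE !big_map; apply: eq_bigr => h _ /=; rewrite addn0.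
Qed.

Lemma plane_psca : ranking_psca (2 * #|F|.+1 * lam) plane_rankings.
Proof.
have [lam_gt0 Xs_inj _] := Xs_psca; split; first by rewrite !muln_gt0 lam_gt0.
  move=> f /flatten_mapP[d _ /flatten_mapP[h /Xs_inj h_inj]].
  by rewrite !inE => /orP[]/eqP->; apply: line_ranking_inj.
move=> a b c ab bc ac; rewrite count_plane_rankings.
have : \sum_(d : option F) (line_count d a b c + 2 * lam * (line d a == line d c)) =
  \sum_(d : option F) (2 * lam + lam * (line d a == line d b) + lam * (line d b == line d c)).
  by apply: eq_bigr => d _; apply: line_count_eq.
rewrite !big_split -!big_distrr /= !sum_common_line // !sum_nat_const card_option.
by move=> sum_eq; apply: (@addIn (2 * lam * 1)); rewrite /= sum_eq; ring.
Qed.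
End PlaneCover.
End AffinePlane.

Lemma lam_aux_fuel f1 f2 r : r <= f1 -> r <= f2 -> lam_aux f1 r = lam_aux f2 r.
Proof.
elim: f1 f2 r => [|f1 IH] [|f2] [|[|r]] //= r_f1 r_f2; congr (_ * _); apply: IH;
  by rewrite uphalf_half /=; lia.
Qed.

Lemma lambda_seq_rec r : 2 <= r ->
  lambda_seq r = 2 * (3 ^ uphalf r + 1) * lambda_seq (uphalf r).
Proof.
case: r => [|r] // r_ge2; rewrite /lambda_seq [LHS]/= ltnNge -ltnS r_ge2 [LHS]/=.
by congr (_ * _); apply: lam_aux_fuel => //; rewrite -divn2 ltn_Pdiv.
Qed.

Definition orders3 : seq {ffun 'I_3 -> nat} :=
  [seq [ffun i : 'I_3 => nth 0 s i] | s <- permutations [:: 0; 1; 2]].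

Lemma orders3_psca : ranking_psca 1 orders3.
Proof.
split=> // [_ /mapP[s s_perm ->] i j|].
  have [uniq_s size_s] : uniq s /\ size s = 3.
    by move: s_perm; rewrite mem_permutations => /[dup]/perm_uniq -> /perm_size ->.
  rewrite !ffunE => eq_ij; apply/ord_inj/eqP.
  by rewrite -(nth_uniq 0 _ _ uniq_s) ?size_s ?eq_ij.
move=> a b c; rewrite count_map.
rewrite (eq_count (a2 := fun s => nth 0 s a < nth 0 s b < nth 0 s c)) => [|s]; last first.
  by rewrite /ordered3 /= !ffunE.
by case: a => [[|[|[|?]]] ?]; case: b => [[|[|[|?]]] ?]; case: c => [[|[|[|?]]] ?].
Qed.

Lemma ranking_psca_card_leq (T T' : finType) lam (Xs : seq {ffun T -> nat}) :
  #|T'| <= #|T| -> ranking_psca lam Xs ->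
  exists Ys : seq {ffun T' -> nat}, ranking_psca lam Ys.
Proof.
move=> le_card Xs_psca; pose g (t : T') : T := enum_val (widen_ord le_card (enum_rank t)).
have g_inj : injective g.
  by move=> s t /enum_val_inj/(congr1 val) /= eq_rank; apply/enum_rank_inj/ord_inj.
by eexists; apply: ranking_psca_restrict g_inj Xs_psca.
Qed.

Lemma ranking_psca_pow3 r : 0 < r ->
  exists2 lam, lam <= lambda_seq r &
    exists Xs : seq {ffun 'I_(3 ^ r) -> nat}, ranking_psca lam Xs.
Proof.
elim/ltn_ind: r => r IH r_gt0; have [->|r_ge2] : r = 1 \/ 1 < r by lia.
  by exists 1 => //; exists orders3; apply: orders3_psca.
have k_gt0 : 0 < uphalf r by rewrite uphalf_half; lia.
have k_lt_r : uphalf r < r by rewrite uphalf_half; lia.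
have [lam lam_le [Xs Xs_psca]] := IH _ k_lt_r k_gt0.
have [F _ card_F] := pPrimePowerField (isT : prime 3) k_gt0.
have [Ys Ys_psca] : exists Ys : seq {ffun F -> nat}, ranking_psca lam Ys.
  by apply: ranking_psca_card_leq Xs_psca; rewrite card_F card_ord.
have F_ge3 : 3 <= #|F| by rewrite card_F (leq_exp2l 1).
exists (2 * #|F|.+1 * lam).
  by rewrite lambda_seq_rec // card_F addn1 leq_mul2l lam_le orbT.
apply: ranking_psca_card_leq (plane_psca Ys_psca F_ge3).
by rewrite card_ord card_prod card_F -expnD leq_exp2l // uphalf_half; lia.
Qed.

Theorem lemma3p2 (r : nat) : 1 <= r -> g_le (3 ^ r) 3 (lambda_seq r).
Proof.
move=> r_gt0; have [lam lam_le [Xs Xs_psca]] := ranking_psca_pow3 r_gt0.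
by exists lam; split=> //; apply: ranking_psca_PSCA Xs_psca.
Qed.
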